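(* Let $(F_n)_{n\ge0}$ be the Fibonacci numbers, $F_0=0$, $F_1=F_2=1$, $F_{n+2}=F_{n+1}+F_n$. Then for every $n\ge2$, $$F_{n-1}F_{\binom{n+1}{2}}=\left(F_{n-1}F_{n+1}+F_nF_{n-2}\right)F_{\binom{n}{2}}+\left(F_nF_{n-1}^2-F_{n-2}F_n^2\right)F_{\binom{n-1}{2}}.$$ *)

From mathcomp Require Import all_boot all_order all_algebra.
Set Implicit Arguments. Unset Strict Implicit. Unset Printing Implicit Defensive.

Fixpoint fib (n : nat) : nat :=
  match n with
  | 0 => 0
  | 1 => 1
  | (m.+1 as k).+1 => fib k + fib m
  end.

From mathcomp Require Import all_boot all_order all_algebra.
From mathcomp Require Import ring.
Import GRing.Theory Num.Theory.

(* Write n = m + 2 and a = C(m+1, 2).  The triangular numbers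
   satisfy C(m+2, 2) = a + (m+1) and C(m+3, 2) = a + (2m+3), so all three
   Fibonacci numbers of binomial index are shifts of F_a by small amounts.
   The addition formula  F_{a+j+1} = F_{j+1} F_{a+1} + F_j F_a  expresses
   each of them as an integer combination of F_{a+1} and F_a, with
   coefficients F_{m+1}, F_{m+2}, F_{2m+2}, F_{2m+3}; the addition formula
   again (for F_{2m+2}) and the doubling formula F_{2m+3} = F_{m+2}^2 + F_{m+1}^2
   rewrite the latter two in terms of F_m and F_{m+1}.  After unfolding the
   recurrence once more, both sides of the theorem are polynomials in
   F_a, F_{a+1}, F_m, F_{m+1} and agree identically, which [ring] checks
   over the integers (needed because of the subtraction in the statement). *)

Lemma fibSS (k : nat) : fib k.+2 = fib k.+1 + fib k.
Proof. by []. Qed.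

Lemma fib_add (a j : nat) : fib (a + j.+1) = fib j.+1 * fib a.+1 + fib j * fib a.
Proof.
elim/ltn_ind: j => -[|[|j]] IH.
- by rewrite addn1 /= mul1n mul0n addn0.
- by rewrite addn2 /= !mul1n.
rewrite !addnS fibSS -!addnS !IH //.
by rewrite !fibSS; ring.
Qed.

Lemma fib_double_odd (k : nat) : fib (k + k).+1 = fib k.+1 * fib k.+1 + fib k * fib k.
Proof. by rewrite -addnS fib_add. Qed.

Lemma bin2S (k : nat) : 'C(k.+1, 2) = 'C(k, 2) + k.
Proof. by rewrite binS bin1. Qed.

Theorem mainTheorem9 (n : nat) (hn : (2 <= n)%N) :
  ((fib n.-1)%:Z * (fib 'C(n.+1, 2))%:Z =
   ((fib n.-1)%:Z * (fib n.+1)%:Z + (fib n)%:Z * (fib n.-2)%:Z) * (fib 'C(n, 2))%:Z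
   + ((fib n)%:Z * (fib n.-1)%:Z ^+ 2 - (fib n.-2)%:Z * (fib n)%:Z ^+ 2)
       * (fib 'C(n.-1, 2))%:Z)%R.
Proof.
case: n hn => [|[|m]] // _; rewrite !succnK.
set a := 'C(m.+1, 2).
have bin_mid : 'C(m.+2, 2) = a + m.+1 by rewrite bin2S.
have bin_top : 'C(m.+3, 2) = a + (m.+1 + m.+1).+1.
  by rewrite bin2S bin_mid -addnA addnS addSn addnS.
rewrite bin_top bin_mid !fib_add fib_double_odd !fibSS.
rewrite !(PoszD, PoszM).
ring.
Qed.
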